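(* For all integers $0<k < n$, the polynomial \[ \overline{ { n \brack k}}_{q,t}^2- \overline{ { n \brack k-1}}_{q,t} \overline{ { n \brack k+1}}_{q,t} \] has non-negative coefficients as a polynomial in $q$ and $t$.
   Context: An overpartition is a partition in which the last occurrence of each distinct part size may be overlined; its weight $|\lambda|$ is the sum of its parts. For integers $0\le b\le a$, $\overline{{a \brack b}}_{q,t}=\sum_{\lambda} t^{\#_o(\lambda)} q^{|\lambda|}$, the sum over all overpartitions $\lambda$ with largest part at most $a-b$ and at most $b$ parts, $\#_o(\lambda)$ being the number of overlined parts. *)

From HB Require Import structures.
From mathcomp Require Import all_boot all_order all_algebra.
Set Implicit Arguments. Unset Strict Implicit. Unset Printing Implicit Defensive.
Import Order.TTheory GRing.Theory Num.Theory.
Local Open Scope ring_scope.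

(* An overpartition with largest part <= m and at most b parts is encoded as
   - p : {ffun 'I_b -> 'I_m.+1}, a nonincreasing b-tuple of parts in [0,m]
     (zero entries are padding, i.e. absent parts), and
   - o : {ffun 'I_b -> bool}, overline flags, allowed only on a positive entry
     that is the last occurrence of its value (all later entries are strictly
     smaller).
   This is a bijection with overpartitions in the b x m box. *)
Definition is_overpart (m b : nat) (p : {ffun 'I_b -> 'I_m.+1})
    (o : {ffun 'I_b -> bool}) : bool :=
  [forall i : 'I_b, forall j : 'I_b, (i <= j)%N ==> (p j <= p i)%N] &&
  [forall i : 'I_b, o i ==>
     ((0 < p i)%N && [forall j : 'I_b, (i < j)%N ==> (p j < p i)%N])].

Definition op_weight (b m : nat) (p : {ffun 'I_b -> 'I_m.+1}) : nat :=
  (\sum_(i : 'I_b) nat_of_ord (p i))%N.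

Definition op_novl (b : nat) (o : {ffun 'I_b -> bool}) : nat :=
  (\sum_(i : 'I_b) nat_of_bool (o i))%N.

(* Overpartition analogue of the Gaussian polynomial, for 0 <= b <= a,
   as a bivariate integer polynomial: an element of {poly {poly int}} whose
   outer variable is t and whose inner variable (coefficients) is q. *)
Definition ovgauss (a b : nat) : {poly {poly int}} :=
  \sum_(po : {ffun 'I_b -> 'I_(a - b).+1} * {ffun 'I_b -> bool}
        | is_overpart po.1 po.2)
     ('X^(op_novl po.2) * ('X^(op_weight po.1))%:P).

From HB Require Import structures.
From mathcomp Require Import all_boot all_order all_algebra.
From mathcomp Require Import ring zify.
Import GRing.Theory Num.Theory.
Local Open Scope ring_scope.

(* Write G(m, b) for the generating function of overpartitions fitting in an
   m x b box, so that the Gaussian polynomial of the statement is G(n - k, k).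
   Splitting off a largest part equal to m + 1 gives
     G(m+1, b+1) = G(m, b+1) + q^(m+1) G(m+1, b) + t q^(m+1) G(m, b),
   and the conjugate recurrence, with q^(b+1) and the roles of m and b swapped,
   follows because the difference of its two sides obeys the first recurrence
   with zero boundary values.  Extend G by zero outside the quadrant.  The
   cross differences G(a,b) G(c,d) - q^s G(a+1,b-1) G(c-1,d+1), s in {0, 1},
   then satisfy four recurrences with coefficients 1, q^e, t q^e that lower
   a + b + c + d and exchange s and 1 - s; by induction they have nonnegative
   coefficients whenever c <= a + 1 and b <= d + 1, except for s = 1 and
   (c, d) = (a + 1, b - 1).  The theorem is the case s = 0, a = c = n - k,
   b = d = k. *)

Local Notation q := ('X%:P : {poly {poly int}}).
Local Notation t := ('X : {poly {poly int}}).
Local Notation nonneg := (polyOver (polyOver_pred Num.Def.nneg_num_pred)).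

Section FinfunCons.

Context {T : Type} {n : nat}.

Definition consf (x : T) (f : {ffun 'I_n -> T}) : {ffun 'I_n.+1 -> T} :=
  [ffun i => if unlift ord0 i is Some j then f j else x].

Definition tailf (g : {ffun 'I_n.+1 -> T}) : {ffun 'I_n -> T} :=
  [ffun j => g (lift ord0 j)].

Lemma consf0 x f : consf x f ord0 = x.
Proof. by rewrite ffunE unlift_none. Qed.

Lemma consfS x f j : consf x f (lift ord0 j) = f j.
Proof. by rewrite ffunE liftK. Qed.

Lemma consfK (g : {ffun 'I_n.+1 -> T}) : consf (g ord0) (tailf g) = g.
Proof.
by apply/ffunP => i; case: (unliftP ord0 i) => [j|] ->; rewrite ?consf0 ?consfS ?ffunE.
Qed.

Lemma tailfK x f : tailf (consf x f) = f.
Proof. by apply/ffunP => j; rewrite ffunE consfS. Qed.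

Lemma sum_consf (F : T -> nat) x f :
  (\sum_(i < n.+1) F (consf x f i) = F x + \sum_(i < n) F (f i))%N.
Proof. by rewrite big_ord_recl consf0; under eq_bigr do rewrite consfS. Qed.

End FinfunCons.

Lemma is_overpartP m b (p : {ffun 'I_b -> 'I_m.+1}) (o : {ffun 'I_b -> bool}) :
  reflect ((forall i j : 'I_b, i <= j -> p j <= p i)%N /\
           (forall i, o i -> 0 < p i /\ forall j : 'I_b, i < j -> p j < p i)%N)
          (is_overpart p o).
Proof.
apply: (iffP andP) => [[/forallP dec /forallP ovl] | [dec ovl]]; split.
- by move=> i j; move: (dec i) => /forallP /(_ j) /implyP.
- move=> i /(implyP (ovl i)) /andP[-> /forallP lt]; split=> // j.
  exact/implyP/lt.
- by apply/forallP => i; apply/forallP => j; apply/implyP/dec.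
- apply/forallP => i; apply/implyP => /ovl[-> lt] /=.
  by apply/forallP => j; apply/implyP/lt.
Qed.

Lemma is_overpart_cons m b (x : 'I_m.+1) (y : bool) p o :
  @is_overpart m b.+1 (consf x p) (consf y o) =
  [&& [forall j, p j <= x]%N, is_overpart p o &
      y ==> (0 < x)%N && [forall j, p j < x]%N].
Proof.
apply/is_overpartP/and3P => [[dec ovl] | [/forallP px /is_overpartP[dec ovl] hy]].
  split.
  - by apply/forallP => j; move: (dec ord0 (lift ord0 j)); rewrite consf0 consfS; apply.
  - apply/is_overpartP; split=> [i j le_ij | i oi].
      by move: (dec (lift ord0 i) (lift ord0 j)); rewrite !consfS !lift0 ltnS; apply.
    move: (ovl (lift ord0 i)); rewrite !consfS => /(_ oi)[-> lt]; split=> // j lt_ij.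
    by move: (lt (lift ord0 j)); rewrite !consfS !lift0 ltnS; apply.
  - apply/implyP => yT; move: (ovl ord0); rewrite !consf0 => /(_ yT)[-> lt] /=.
    by apply/forallP => j; move: (lt (lift ord0 j)); rewrite consfS lift0; apply.
split=> [i j | i].
  case: (unliftP ord0 i) => [i'|] ->; case: (unliftP ord0 j) => [j'|] ->;
    by rewrite ?consf0 ?consfS ?lift0 ?ltnS // => /dec.
case: (unliftP ord0 i) => [i'|] ->.
  rewrite !consfS => /ovl[-> lt]; split=> // j.
  by case: (unliftP ord0 j) => [j'|] ->; rewrite ?consfS ?lift0 ?ltnS // => /lt.
rewrite !consf0 => yT; move: hy; rewrite yT /= => /andP[-> /forallP lt]; split=> // j.
by case: (unliftP ord0 j) => [j'|] ->; rewrite ?consfS ?lift0.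
Qed.

Definition ovmonomial {m b : nat} (po : {ffun 'I_b -> 'I_m.+1} * {ffun 'I_b -> bool}) :
  {poly {poly int}} := t ^+ op_novl po.2 * q ^+ op_weight po.1.

Definition ovbox m b : {poly {poly int}} :=
  \sum_(po : {ffun 'I_b -> 'I_m.+1} * {ffun 'I_b -> bool} | is_overpart po.1 po.2)
    ovmonomial po.

Lemma ovgaussE n k : ovgauss n k = ovbox (n - k) k.
Proof. by apply: eq_bigr => po _; rewrite rmorphXn. Qed.

Lemma ovmonomial_cons m b (x : 'I_m.+1) (y : bool) (p : {ffun 'I_b -> 'I_m.+1}) o :
  ovmonomial (consf x p, consf y o) = t ^+ y * q ^+ x * ovmonomial (p, o).
Proof. by rewrite /ovmonomial /op_novl /op_weight /= !sum_consf !exprD; ring. Qed.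

Lemma ovbox_narrow m b :
  \sum_(po : {ffun 'I_b -> 'I_m.+2} * {ffun 'I_b -> bool} |
        is_overpart po.1 po.2 && [forall j, po.1 j < m.+1]%N) ovmonomial po =
  ovbox m b.
Proof.
pose widen (p : {ffun 'I_b -> 'I_m.+1}) := [ffun i => widen_ord (leqnSn m.+1) (p i)].
pose narrow (p : {ffun 'I_b -> 'I_m.+2}) : {ffun 'I_b -> 'I_m.+1} :=
  [ffun i => inord (p i)].
have widenK : cancel widen narrow.
  by move=> p; apply/ffunP => i; apply: val_inj; rewrite !ffunE /= inordK.
rewrite (reindex_onto (fun po => (widen po.1, po.2)) (fun po => (narrow po.1, po.2)));
  last first.
  move=> [p o] /andP[_ /forallP small]; congr pair.
  by apply/ffunP => i; apply: val_inj; rewrite !ffunE /= inordK.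
apply: eq_big => [[p o] | [p o] _] /=.
  rewrite widenK eqxx andbT; have -> : [forall j, (widen p j < m.+1)%N].
    by apply/forallP => j; rewrite ffunE /=.
  rewrite andbT /is_overpart; congr (_ && _).
    by apply: eq_forallb => i; apply: eq_forallb => j; rewrite !ffunE.
  by apply: eq_forallb => i; rewrite !ffunE; congr (_ ==> (_ && _));
    apply: eq_forallb => j; rewrite !ffunE.
by rewrite /ovmonomial /op_weight /=; under eq_bigr do rewrite ffunE.
Qed.

Lemma ovbox_m0 m : ovbox m 0 = 1.
Proof.
rewrite /ovbox (big_pred1 ([ffun => ord0], [ffun => false])) => [|[p o] /=].
  by rewrite /ovmonomial /op_novl /op_weight !big_ord0 mulr1.
have -> : p = [ffun => ord0] by apply/ffunP => -[].
have -> : o = [ffun => false] by apply/ffunP => -[].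
by rewrite eqxx; apply/is_overpartP; split=> -[].
Qed.

Lemma ovbox_0b b : ovbox 0 b = 1.
Proof.
rewrite /ovbox (big_pred1 ([ffun => ord0], [ffun => false])) => [|[p o] /=].
  rewrite /ovmonomial /op_novl /op_weight !big1 ?mulr1 // => i _; by rewrite ffunE.
have -> : p = [ffun => ord0] by apply/ffunP => i; rewrite ffunE; apply/val_inj; case: (p i) => -[].
apply/is_overpartP/eqP => [[_ ovl] | [->]]; last by split=> [i j|i]; rewrite !ffunE.
by congr pair; apply/ffunP => i; rewrite ffunE; apply/negP => /ovl[]; rewrite ffunE.
Qed.

Lemma is_overpart_cons_max m b (x : 'I_m.+2) y p o :
  @is_overpart m.+1 b.+1 (consf x p) (consf y o) &&
    ~~ [forall j, consf x p j < m.+1]%N =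
  [&& x == ord_max, is_overpart p o & y ==> [forall j, p j < m.+1]%N].
Proof.
rewrite is_overpart_cons; have [-> | ne_x_max] := eqVneq x ord_max.
  have -> : [forall j, p j <= @ord_max m.+1]%N by apply/forallP => j; rewrite -ltnS.
  rewrite /= -[RHS]andbT; congr (_ && _).
  by apply/forallPn; exists ord0; rewrite consf0 ltnn.
have lt_x_max : (x < m.+1)%N.
  by rewrite -[m.+1]/(val (@ord_max m.+1)) ltn_neqAle val_eqE ne_x_max -ltnS /=.
apply/negbTE/andP => -[/and3P[/forallP le_px _ _]]; apply/negP/negPn/forallP => i.
case: (unliftP ord0 i) => [j|] ->; rewrite ?consf0 ?consfS //.
exact: leq_ltn_trans (le_px j) lt_x_max.
Qed.

Lemma ovbox_recl m b :
  ovbox m.+1 b.+1 = ovbox m b.+1 + q ^+ m.+1 * ovbox m.+1 b + t * q ^+ m.+1 * ovbox m b.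
Proof.
rewrite {1}/ovbox (bigID (fun po : {ffun 'I_b.+1 -> 'I_m.+2} * {ffun 'I_b.+1 -> bool} =>
  [forall j, po.1 j < m.+1]%N)) /= ovbox_narrow.
rewrite -addrA; congr (_ + _).
pose cons2 (z : ('I_m.+2 * bool) * ({ffun 'I_b -> 'I_m.+2} * {ffun 'I_b -> bool})) :=
  (consf z.1.1 z.2.1, consf z.1.2 z.2.2).
pose split2 (po : {ffun 'I_b.+1 -> 'I_m.+2} * {ffun 'I_b.+1 -> bool}) :=
  ((po.1 ord0, po.2 ord0), (tailf po.1, tailf po.2)).
have cons2K : cancel cons2 split2 by move=> [[x y] [p o]]; rewrite /split2 !consf0 !tailfK.
have split2K : cancel split2 cons2 by move=> [p o]; rewrite /cons2 !consfK.
rewrite (reindex cons2) /=; last exact: onW_bij (Bijective cons2K split2K).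
transitivity (\sum_(x : 'I_m.+2 | x == ord_max) \sum_(y : bool)
  \sum_(po : {ffun 'I_b -> 'I_m.+2} * {ffun 'I_b -> bool} |
        is_overpart po.1 po.2 && (y ==> [forall j, po.1 j < m.+1]%N))
    t ^+ y * q ^+ x * ovmonomial po).
  rewrite pair_big_dep pair_big_dep; apply: eq_big => [[[x y] [p o]] | [[x y] [p o]] _] /=.
    by rewrite is_overpart_cons_max andbT andbA.
  exact: ovmonomial_cons.
rewrite big_pred1_eq big_bool /= addrC; congr (_ + _).
  by rewrite /ovbox mulr_sumr; apply: eq_big => [po | po _]; rewrite ?andbT ?mul1r.
by rewrite -ovbox_narrow mulr_sumr; apply: eq_bigr => po _; rewrite expr1.
Qed.

Definition ovbox_defect m n : {poly {poly int}} :=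
  ovbox m.+1 n.+1 -
    (ovbox m.+1 n + q ^+ n.+1 * ovbox m n.+1 + t * q ^+ n.+1 * ovbox m n).

Lemma ovbox_defect0 m n : ovbox_defect m n = 0.
Proof.
have expand := (ovbox_recl, ovbox_m0, ovbox_0b, exprS).
elim: m n => [|m IHm] n.
  elim: n => [|n IHn]; first by rewrite /ovbox_defect !expand; ring.
  have -> : ovbox_defect 0 n.+1 = q * ovbox_defect 0 n.
    by rewrite /ovbox_defect !expand; ring.
  by rewrite IHn mulr0.
elim: n => [|n IHn].
  have -> : ovbox_defect m.+1 0 = ovbox_defect m 0.
    by rewrite /ovbox_defect !expand; ring.
  exact: IHm.
have -> : ovbox_defect m.+1 n.+1 = ovbox_defect m n.+1 +
    q ^+ m.+2 * ovbox_defect m.+1 n + t * q ^+ m.+2 * ovbox_defect m n.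
  by rewrite /ovbox_defect !expand; ring.
by rewrite !IHm IHn !mulr0 !addr0.
Qed.

Lemma ovbox_recr m n :
  ovbox m.+1 n.+1 = ovbox m.+1 n + q ^+ n.+1 * ovbox m n.+1 + t * q ^+ n.+1 * ovbox m n.
Proof. by apply/eqP; rewrite -subr_eq0; apply/eqP/ovbox_defect0. Qed.

Lemma nonneg_rec3 n (x y z : {poly {poly int}}) :
  x \is a nonneg -> y \is a nonneg -> z \is a nonneg ->
  x + q ^+ n * y + t * q ^+ n * z \is a nonneg.
Proof. by move=> *; rewrite !rpredD ?rpredM ?rpredX ?polyOverX ?polyOverC ?polyOverX. Qed.

Lemma ovbox_nonneg m b : ovbox m b \is a nonneg.
Proof.
elim: m b => [|m IHm] b; first by rewrite ovbox_0b rpred1.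
elim: b => [|b IHb]; first by rewrite ovbox_m0 rpred1.
by rewrite ovbox_recl nonneg_rec3.
Qed.

Definition ovboxz (x y : int) : {poly {poly int}} :=
  if (x, y) is (Posz m, Posz n) then ovbox m n else 0.

Lemma ovboxz_out x y : (x < 0) || (y < 0) -> ovboxz x y = 0.
Proof. by case: x => [m|m]; case: y. Qed.

Lemma ovboxzE (m n : nat) : ovboxz m n = ovbox m n.
Proof. by []. Qed.

Lemma ovboxz_nonneg x y : ovboxz x y \is a nonneg.
Proof. by case: x => [m|m]; case: y => [n|n]; rewrite /= ?ovbox_nonneg ?rpred0. Qed.

Lemma ovboxz_recl x y : (x != 0) || (y != 0) ->
  ovboxz x y = ovboxz (x - 1) y + q ^+ `|x| * ovboxz x (y - 1) + t * q ^+ `|x| * ovboxz (x - 1) (y - 1).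
Proof.
case: x => [m|m] nz; last by rewrite !ovboxz_out ?mulr0 ?addr0 //; lia.
case: y nz => [n|n] nz; last by rewrite !ovboxz_out ?mulr0 ?addr0 //; lia.
have predS k : (k.+1%:Z - 1 = k)%R by lia.
case: m nz => [|m]; case: n => [|n] //= _; rewrite ?predS.
- by rewrite !(@ovboxz_out (0 - 1)) // !ovboxzE !ovbox_0b expr0 !mulr0 !addr0 mul1r add0r.
- by rewrite !(@ovboxz_out _ (0 - 1)) ?orbT // !ovboxzE !ovbox_m0 !mulr0 !addr0.
- exact: ovbox_recl.
Qed.

Lemma ovboxz_recr x y : (x != 0) || (y != 0) ->
  ovboxz x y = ovboxz x (y - 1) + q ^+ `|y| * ovboxz (x - 1) y + t * q ^+ `|y| * ovboxz (x - 1) (y - 1).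
Proof.
case: x => [m|m] nz; last by rewrite !ovboxz_out ?mulr0 ?addr0 //; lia.
case: y nz => [n|n] nz; last by rewrite !ovboxz_out ?mulr0 ?addr0 //; lia.
have predS k : (k.+1%:Z - 1 = k)%R by lia.
case: m nz => [|m]; case: n => [|n] //= _; rewrite ?predS.
- by rewrite !(@ovboxz_out (0 - 1)) // !ovboxzE !ovbox_0b !mulr0 !addr0.
- by rewrite !(@ovboxz_out _ (0 - 1)) ?orbT // !ovboxzE !ovbox_m0 expr0 !mulr0 !addr0 add0r mul1r.
- exact: ovbox_recr.
Qed.

Definition ovcross (s : nat) (a b c d : int) : {poly {poly int}} :=
  ovboxz a b * ovboxz c d - q ^+ s * (ovboxz (a + 1) (b - 1) * ovboxz (c - 1) (d + 1)).

Lemma ovcross_rec_a (s : nat) (a b c d : int) : 0 < a -> 0 <= b ->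
  ovcross s a b c d = ovcross s (a - 1) b c d + q ^+ `|a| * ovcross s.+1 a (b - 1) c d
                      + t * q ^+ `|a| * ovcross s.+1 (a - 1) (b - 1) c d.
Proof.
move=> a_gt0 b_ge0; rewrite /ovcross (ovboxz_recl a b) ?(ovboxz_recl (a + 1) (b - 1)); try lia.
have -> : absz (a + 1) = (absz a).+1 by lia.
by rewrite addrK subrK !exprS; ring.
Qed.

Lemma ovcross_rec_b (s : nat) (a b c d : int) : 0 < a -> 0 < b ->
  ovcross s.+1 a b c d = ovcross s.+1 a (b - 1) c d + q ^+ `|b| * ovcross s (a - 1) b c d
                         + t * q ^+ `|b| * ovcross s (a - 1) (b - 1) c d.
Proof.
move=> a_gt0 b_gt0; rewrite /ovcross (ovboxz_recr a b) ?(ovboxz_recr (a + 1) (b - 1)); try lia.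
have -> : absz b = (absz (b - 1)).+1 by lia.
by rewrite addrK subrK !exprS; ring.
Qed.

Lemma ovcross_rec_c (s : nat) (a b c d : int) : 0 < c -> 0 <= d ->
  ovcross s.+1 a b c d = ovcross s.+1 a b (c - 1) d + q ^+ `|c| * ovcross s a b c (d - 1)
                         + t * q ^+ `|c| * ovcross s a b (c - 1) (d - 1).
Proof.
move=> c_gt0 d_ge0; rewrite /ovcross (ovboxz_recl c d) ?(ovboxz_recl (c - 1) (d + 1)); try lia.
have -> : absz c = (absz (c - 1)).+1 by lia.
by rewrite addrK subrK !exprS; ring.
Qed.

Lemma ovcross_rec_d (s : nat) (a b c d : int) : 0 < c -> 0 <= d ->
  ovcross s a b c d = ovcross s a b c (d - 1) + q ^+ `|d| * ovcross s.+1 a b (c - 1) d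
                      + t * q ^+ `|d| * ovcross s.+1 a b (c - 1) (d - 1).
Proof.
move=> c_gt0 d_ge0; rewrite /ovcross (ovboxz_recr c d) ?(ovboxz_recr (c - 1) (d + 1)); try lia.
have -> : absz (d + 1) = (absz d).+1 by lia.
by rewrite addrK subrK !exprS; ring.
Qed.

Lemma ovcross_edge (s : nat) (a b c d : int) : (b <= 0) || (c <= 0) ->
  ovcross s a b c d = ovboxz a b * ovboxz c d.
Proof.
case/orP => [b_le0 | c_le0]; rewrite /ovcross.
  by rewrite (@ovboxz_out _ (b - 1)) ?mul0r ?mulr0 ?subr0 //; lia.
by rewrite (@ovboxz_out (c - 1)) ?mulr0 ?subr0 //; lia.
Qed.

(* The last hypothesis only excludes (c, d) = (a + 1, b - 1) when s = 1. *)
Lemma ovcross_nonneg (s : nat) (a b c d : int) :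
  (s <= 1)%N -> 0 <= a -> 0 <= b -> 0 <= c -> 0 <= d ->
  c <= a + 1 -> b <= d + 1 -> c + b + s%:Z <= a + d + 2 ->
  ovcross s a b c d \is a nonneg.
Proof.
have [k le_k] : exists k : nat, a + b + c + d <= k%:Z by exists (absz (a + b + c + d)); lia.
elim: k s a b c d le_k => [|k IH] s a b c d le_k hs ha hb hc hd hca hbd hsum.
  by rewrite ovcross_edge ?rpredM ?ovboxz_nonneg //; lia.
have [edge | inner] := boolP ((b <= 0) || (c <= 0)).
  by rewrite ovcross_edge ?rpredM ?ovboxz_nonneg.
have [c_le_a | c_gt_a] := lerP c a; case: s hs hsum => [|[|//]] _ hsum.
- by rewrite ovcross_rec_a; try lia; apply: nonneg_rec3; apply: IH; lia.
- by rewrite ovcross_rec_b; try lia; apply: nonneg_rec3; apply: IH; lia.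
- have [d_eq | d_ne] := eqVneq d (b - 1).
    have -> : c = a + 1 by lia.
    by rewrite /ovcross d_eq addrK subrK expr0 mul1r mulrC subrr rpred0.
  by rewrite ovcross_rec_d; try lia; apply: nonneg_rec3; apply: IH; lia.
- by rewrite ovcross_rec_c; try lia; apply: nonneg_rec3; apply: IH; lia.
Qed.

Theorem corollary6p1 (n k : nat) :
  (0 < k)%N -> (k < n)%N ->
  forall i j : nat,
    0 <= ((ovgauss n k ^+ 2 - ovgauss n k.-1 * ovgauss n k.+1)`_i)`_j.
Proof.
move=> k_gt0 lt_kn i j.
have : ovcross 0 (n - k)%N k (n - k)%N k \is a nonneg by apply: ovcross_nonneg; lia.
have -> : ovcross 0 (n - k)%N k (n - k)%N k =
    ovgauss n k ^+ 2 - ovgauss n k.-1 * ovgauss n k.+1.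
  rewrite /ovcross expr0 mul1r expr2 !ovgaussE -!ovboxzE.
  by congr (_ * _ - _ * _); congr ovboxz; lia.
by move=> /polyOverP/(_ i)/polyOverP/(_ j).
Qed.
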